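(* Let $1\le j\le k$ be integers, let $G$ and $H$ be complementary $(j,k)$-bicliques, and let $g(x)$, $h(x)$ be the interesting factors of $P_G(x)$ and $P_H(x)$ respectively. Then $$g(x)=(-1)^j\,h(-x+j+k-1).$$
   Context: All graphs are finite and simple. For integers $1\le j\le k$, a $(j,k)$-biclique is a graph whose vertex set is the disjoint union of a $j$-clique and a $k$-clique, with an arbitrary set of additional edges (bridging edges) each joining a vertex of the $j$-clique to a vertex of the $k$-clique. Two $(j,k)$-bicliques $G,H$ on the same two cliques are complementary if $H$ is obtained from $G$ by replacing every bridging edge by a non-edge and every non-adjacent pair (one vertex in each clique) by an edge, keeping both cliques. $P_G(x)$ is the chromatic polynomial; $(x)_n=x(x-1)\cdots(x-n+1)$. The interesting factor of a $(j,k)$-biclique $G$ is the degree-$j$ polynomial $P_G(x)/(x)_k$. *)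

From HB Require Import structures.
From mathcomp Require Import all_boot all_order all_algebra.
Set Implicit Arguments. Unset Strict Implicit. Unset Printing Implicit Defensive.
Import Order.TTheory GRing.Theory Num.Theory.
Local Open Scope ring_scope.

(* A simple graph on a finite vertex type V is given by an adjacency relation
   (assumed symmetric and irreflexive where relevant). *)

Definition proper_coloring (V : finType) (e : rel V) (n : nat)
  (f : {ffun V -> 'I_n}) : bool :=
  [forall u, forall v, e u v ==> (f u != f v)].

Definition num_colorings (V : finType) (e : rel V) (n : nat) : nat :=
  #|[set f : {ffun V -> 'I_n} | proper_coloring e f]|.

(* p is the chromatic polynomial of (V, e): p(n) = number of proper
   n-colourings for every natural n (this determines p uniquely). *)
Definition is_chromatic_poly (V : finType) (e : rel V) (p : {poly rat}) : Prop :=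
  forall n : nat, p.[n%:R] = (num_colorings e n)%:R.

(* (j,k)-biclique: vertex set 'I_j + 'I_k, the two sides are cliques, and
   B a b says whether a of the j-clique is joined to b of the k-clique. *)
Definition biclique_rel (j k : nat) (B : 'I_j -> 'I_k -> bool)
  : rel ('I_j + 'I_k) :=
  fun u v =>
    match u, v with
    | inl a, inl a' => a != a'
    | inr b, inr b' => b != b'
    | inl a, inr b => B a b
    | inr b, inl a => B a b
    end.

Definition compl_bridges (j k : nat) (B : 'I_j -> 'I_k -> bool)
  : 'I_j -> 'I_k -> bool := fun a b => ~~ B a b.

Definition falling_poly (n : nat) : {poly rat} :=
  \prod_(i < n) ('X - (i%:R)%:P).

Definition interesting_factor (k : nat) (P : {poly rat}) : {poly rat} :=
  (P %/ falling_poly k)%R.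

From HB Require Import structures.
From mathcomp Require Import all_boot all_order all_algebra ring.
Set Implicit Arguments. Unset Strict Implicit. Unset Printing Implicit Defensive.
Import GRing.Theory Num.Theory.
Local Open Scope ring_scope.

(* Colour the k-clique first.  The number of ways to complete an injective
   colouring of the k-clique with n + k colours to a proper colouring of the
   biclique depends only on n and is a polynomial p_B(n), and
   P_G(x) = (x)_k p_B(x - k), so p_B(x - k) is the interesting factor.
   Removing a bridge ab loses exactly the completions giving a the colour of
   b, which are the completions for the biclique with a and b deleted
   (deletion-contraction).  Hence p_B = p_(B-ab) - p_B' while
   p_(~B) = p_(~B+ab) + p_(~B'), so the reflection identity
   p_B(y) = (-1)^j p_(~B)(j - k - 1 - y) passes from B - ab and B' to B.
   Without bridges it is the reflection (y + k)_j = (-1)^j (j - k - 1 - y)_j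
   of falling factorials. *)

Lemma eq_poly_nat (R : numDomainType) (p q : {poly R}) :
  (forall m : nat, p.[m%:R] = q.[m%:R]) -> p = q.
Proof.
move=> pq; apply/eqP; rewrite -subr_eq0; apply/eqP.
apply: (@roots_geq_poly_eq0 _ _ [seq i%:R | i <- iota 0 (size (p - q))]).
- by apply/allP => _ /mapP [i _ ->]; rewrite /root hornerD hornerN pq subrr.
- by rewrite map_inj_uniq ?iota_uniq // => x y /eqP; rewrite eqr_nat => /eqP.
- by rewrite size_map size_iota.
Qed.

Lemma horner_falling_poly (n : nat) (x : rat) :
  (falling_poly n).[x] = \prod_(i < n) (x - i%:R).
Proof. by rewrite horner_prod; apply: eq_bigr => i _; rewrite hornerXsubC. Qed.

Lemma falling_poly_nat (n m : nat) : (falling_poly n).[m%:R] = (m ^_ n)%:R.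
Proof.
rewrite horner_falling_poly; elim: n => [|n IHn]; first by rewrite big_ord0.
rewrite big_ord_recr /= IHn ffactnSr natrM.
have [le_nm|lt_mn] := leqP n m; first by rewrite natrB.
by rewrite ffact_small // !mul0r.
Qed.

Lemma falling_poly_reflect (n : nat) (x : rat) :
  (falling_poly n).[x] = (-1) ^+ n * (falling_poly n).[n%:R - 1 - x].
Proof.
rewrite !horner_falling_poly -[in (-1) ^+ n](card_ord n) -prodrN.
rewrite (reindex_inj rev_ord_inj); apply: eq_bigr => i _ /=.
by rewrite natrB // -addn1 natrD; ring.
Qed.

Definition avoids (J K T : finType) (B : J -> K -> bool) (c : K -> T)
  (f : J -> T) : bool :=
  [forall a, forall b, B a b ==> (f a != c b)].

Definition num_extensions (J K T : finType) (B : J -> K -> bool) (c : K -> T)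
  : nat :=
  #|[set f : {ffun J -> T} | injectiveb f && avoids B c f]|.

Lemma num_extensions_no_bridges (J K T : finType) (B : J -> K -> bool)
  (c : K -> T) :
  (forall a b, B a b = false) -> num_extensions B c = (#|T| ^_ #|J|)%N.
Proof.
move=> noB; rewrite -card_inj_ffuns; apply: eq_card => f; rewrite !inE.
suff -> : avoids B c f by rewrite andbT.
by apply/forallP => a; apply/forallP => b; rewrite noB.
Qed.

Lemma num_extensions_all_bridges (J K T : finType) (B : J -> K -> bool)
  (c : K -> T) :
  injective c -> (forall a b, B a b) ->
  num_extensions B c = ((#|T| - #|K|) ^_ #|J|)%N.
Proof.
move=> c_inj allB.
have -> : (#|T| - #|K|)%N = #|~: [set c b | b in K]|.
  by rewrite cardsCs setCK card_imset.
rewrite -card_inj_ffuns_on; apply: eq_card => f; rewrite !inE andbC.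
congr (_ && _); apply/forallP/ffun_onP => [fP a|fP a].
- rewrite inE; apply/imsetP => -[b _ fab].
  by move/forallP: (fP a) => /(_ b); rewrite allB fab eqxx.
- apply/forallP => b; rewrite allB /=; move: (fP a); rewrite inE.
  by apply: contra => /eqP ->; apply: imset_f.
Qed.

Definition is_extension_poly (J K : finType) (B : J -> K -> bool)
  (p : {poly rat}) : Prop :=
  forall (T : finType) (c : K -> T), injective c ->
    (num_extensions B c)%:R = p.[(#|T| - #|K|)%N%:R].

Lemma card_sig_neq (X : finType) (x0 : X) : #|{: {x | x != x0}}| = #|X|.-1.
Proof. by rewrite card_sig -(cardC1 x0); apply: eq_card. Qed.

Lemma eq_or_val_neq (X : finType) (x0 x : X) :
  x = x0 \/ exists x' : {y | y != x0}, x = val x'.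
Proof. by have [->|ne] := eqVneq x x0; [left | right; exists (exist _ x ne)]. Qed.

Section DeleteBridge.
Variables (J K : finType) (B B1 : J -> K -> bool) (a0 : J) (b0 : K).
Variable Br : {a | a != a0} -> {b | b != b0} -> bool.
Hypothesis B_a0b0 : B a0 b0 = false.
Hypothesis B1E : forall a b, B1 a b = B a b || ((a == a0) && (b == b0)).
Hypothesis BrE : forall a b, Br a b = B (val a) (val b).

Lemma avoids_add_bridge (T : finType) (c : K -> T) (f : J -> T) :
  avoids B1 c f = avoids B c f && (f a0 != c b0).
Proof.
apply/forallP/andP => [fP | [/forallP fP fa0] a].
- split; last by move/forallP: (fP a0) => /(_ b0); rewrite B1E !eqxx orbT.
  apply/forallP => a; apply/forallP => b; apply/implyP => Bab.
  by move/forallP: (fP a) => /(_ b); rewrite B1E Bab.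
- apply/forallP => b; rewrite B1E; case Bab: (B a b) => /=.
    by move/forallP: (fP a) => /(_ b); rewrite Bab.
  by apply/implyP => /andP [/eqP -> /eqP ->].
Qed.

Section Contraction.
Variables (T : finType) (c : K -> T).
Hypothesis c_inj : injective c.

Lemma restrict_coloring_subproof (b : {b | b != b0}) : c (val b) != c b0.
Proof. by rewrite (inj_eq c_inj); exact: (valP b). Qed.

Definition restrict_coloring (b : {b | b != b0}) : {t | t != c b0} :=
  exist _ (c (val b)) (restrict_coloring_subproof b).

Lemma restrict_coloring_inj : injective restrict_coloring.
Proof. by move=> x y /(congr1 val) /c_inj /val_inj. Qed.

Definition extend_at_a0 (g : {ffun {a | a != a0} -> {t | t != c b0}})
  : {ffun J -> T} :=
  [ffun a => oapp (fun a' => val (g a')) (c b0) (insub a)].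

Lemma extend_at_a0_val g a : extend_at_a0 g (val a) = val (g a).
Proof. by rewrite ffunE valK. Qed.

Lemma extend_at_a0_a0 g : extend_at_a0 g a0 = c b0.
Proof. by rewrite ffunE insubF // eqxx. Qed.

Lemma extend_at_a0_inj : injective extend_at_a0.
Proof.
move=> g g' gg'; apply/ffunP => a; apply: val_inj.
by rewrite -!extend_at_a0_val gg'.
Qed.

Lemma injectiveb_extend_at_a0 g : injectiveb (extend_at_a0 g) = injectiveb g.
Proof.
apply/injectiveP/injectiveP => g_inj x y.
  by move=> gxy; apply/val_inj/g_inj; rewrite !extend_at_a0_val gxy.
case: (eq_or_val_neq a0 x) => [->|[x' ->]];
  case: (eq_or_val_neq a0 y) => [->|[y' ->]];
  rewrite ?extend_at_a0_a0 ?extend_at_a0_val // => gxy.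
- by have := valP (g y'); rewrite -gxy eqxx.
- by have := valP (g x'); rewrite gxy eqxx.
- by rewrite (g_inj _ _ (val_inj gxy)).
Qed.

Lemma avoids_extend_at_a0 g :
  avoids B c (extend_at_a0 g) = avoids Br restrict_coloring g.
Proof.
apply/forallP/forallP => gP a.
  apply/forallP => b; apply/implyP; rewrite BrE => Bab.
  rewrite -(inj_eq val_inj) /= -extend_at_a0_val.
  by move/forallP: (gP (val a)) => /(_ (val b)) /implyP; apply.
apply/forallP => b; apply/implyP => Bab.
case: (eq_or_val_neq a0 a) Bab => [->|[a' ->]] Bab.
  rewrite extend_at_a0_a0 (inj_eq c_inj); apply: contraTneq Bab => <-.
  by rewrite B_a0b0.
rewrite extend_at_a0_val; case: (eq_or_val_neq b0 b) Bab => [->|[b' ->]] Bab.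
  exact: (valP (g a')).
by have := forallP (gP a') b'; rewrite BrE Bab /= -(inj_eq val_inj).
Qed.

Lemma extend_at_a0_onto (f : {ffun J -> T}) :
  injective f -> f a0 = c b0 -> exists g, f = extend_at_a0 g.
Proof.
move=> f_inj fa0.
have f_neq (a : {a | a != a0}) : f (val a) != c b0.
  by rewrite -fa0 (inj_eq f_inj); exact: (valP a).
exists [ffun a => exist _ (f (val a)) (f_neq a)]; apply/ffunP => a.
by case: (eq_or_val_neq a0 a) => [->|[a' ->]];
  rewrite ?extend_at_a0_a0 ?extend_at_a0_val ?ffunE.
Qed.

Lemma card_extensions_at_a0 :
  #|[set f : {ffun J -> T} | injectiveb f && avoids B c f && (f a0 == c b0)]|
  = num_extensions Br restrict_coloring.
Proof.
rewrite /num_extensions -(card_imset _ extend_at_a0_inj); apply: eq_card => f.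
rewrite !inE; apply/idP/imsetP => [/andP [/andP [f_inj fB] /eqP fa0] | [g]].
  have [g def_f] := extend_at_a0_onto (injectiveP _ f_inj) fa0.
  exists g => //; move: f_inj fB; rewrite def_f inE.
  by rewrite injectiveb_extend_at_a0 avoids_extend_at_a0 => -> ->.
rewrite inE -injectiveb_extend_at_a0 -avoids_extend_at_a0 => gP ->.
by rewrite gP extend_at_a0_a0 eqxx.
Qed.

Lemma num_extensions_delete_bridge :
  num_extensions B c =
    (num_extensions B1 c + num_extensions Br restrict_coloring)%N.
Proof.
rewrite -card_extensions_at_a0 /num_extensions.
rewrite -(cardsID [set f : {ffun J -> T} | f a0 == c b0]) addnC.
congr (_ + _)%N; apply: eq_card => f; rewrite !inE ?avoids_add_bridge;
  by case: (f a0 == c b0); rewrite ?andbT ?andbF.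
Qed.

End Contraction.

Lemma num_extensions_delete_bridge_poly (T : finType) (c : K -> T)
  (p2 : {poly rat}) :
  injective c -> is_extension_poly Br p2 ->
  (num_extensions B c)%:R
    = (num_extensions B1 c)%:R + p2.[(#|T| - #|K|)%N%:R] :> rat.
Proof.
move=> c_inj Br_p2.
rewrite (num_extensions_delete_bridge c_inj) natrD Br_p2; last first.
  exact: restrict_coloring_inj.
have K_gt0 : (0 < #|K|)%N by apply/card_gt0P; exists b0.
have := leq_card _ c_inj; rewrite !card_sig_neq.
by case: #|K| K_gt0 => // k _; case: #|T| => // t _.
Qed.

Lemma is_extension_poly_delete_bridge (p1 p2 : {poly rat}) :
  is_extension_poly B1 p1 -> is_extension_poly Br p2 ->
  is_extension_poly B (p1 + p2).
Proof.
move=> B1_p1 Br_p2 T c c_inj.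
by rewrite (num_extensions_delete_bridge_poly c_inj Br_p2) B1_p1 // hornerD.
Qed.

Lemma is_extension_poly_add_bridge (p p2 : {poly rat}) :
  is_extension_poly B p -> is_extension_poly Br p2 ->
  is_extension_poly B1 (p - p2).
Proof.
move=> B_p Br_p2 T c c_inj.
move: (num_extensions_delete_bridge_poly c_inj Br_p2).
by rewrite B_p // hornerD hornerN => ->; rewrite addrK.
Qed.

End DeleteBridge.

Definition extension_reciprocity (J K : finType) (B : J -> K -> bool) : Prop :=
  exists p q : {poly rat}, [/\ is_extension_poly B p,
    is_extension_poly (fun a b => ~~ B a b) q &
    forall y, p.[y] = (-1) ^+ #|J| * q.[#|J|%:R - #|K|%:R - 1 - y]].

Lemma extension_reciprocity_no_bridges (J K : finType) (B : J -> K -> bool) :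
  (forall a b, B a b = false) -> extension_reciprocity B.
Proof.
move=> noB; exists (falling_poly #|J| \Po ('X + #|K|%:R%:P)), (falling_poly #|J|).
split=> [T c c_inj | T c c_inj | y].
- rewrite num_extensions_no_bridges // horner_comp hornerD hornerX hornerC.
  by rewrite -natrD subnK ?falling_poly_nat // (leq_card _ c_inj).
- by rewrite num_extensions_all_bridges ?falling_poly_nat // => a b; rewrite noB.
- rewrite horner_comp hornerD hornerX hornerC [LHS]falling_poly_reflect.
  by congr (_ * (falling_poly _).[_]); ring.
Qed.

Definition restrict_bridges (J K : finType) (B : J -> K -> bool) (a0 : J)
  (b0 : K) : {a | a != a0} -> {b | b != b0} -> bool :=
  fun a b => B (val a) (val b).
Arguments restrict_bridges {J K} B a0 b0.

Lemma extension_reciprocity_add_bridge (J K : finType) (B B0 : J -> K -> bool)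
  (a0 : J) (b0 : K) :
  B0 a0 b0 = false -> (forall a b, B a b = B0 a b || ((a == a0) && (b == b0))) ->
  extension_reciprocity B0 -> extension_reciprocity (restrict_bridges B0 a0 b0) ->
  extension_reciprocity B.
Proof.
move=> B0_a0b0 BE [p0 [q0 [B0_p0 nB0_q0 pq0]]] [p2 [q2 [B2_p2 nB2_q2 pq2]]].
have nBE a b : ~~ B0 a b = ~~ B a b || ((a == a0) && (b == b0)).
  by rewrite BE; case: andP => [[/eqP -> /eqP ->]|]; rewrite ?B0_a0b0 ?orbF.
have nB2E (a : {a | a != a0}) b :
    ~~ restrict_bridges B0 a0 b0 a b = ~~ B (val a) (val b).
  by rewrite /restrict_bridges BE (negPf (valP a)) orbF.
exists (p0 - p2), (q0 + q2); split.
- exact: (is_extension_poly_add_bridge B0_a0b0 BE (fun _ _ => erefl) B0_p0 B2_p2).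
- apply: (is_extension_poly_delete_bridge _ nBE nB2E nB0_q0 nB2_q2).
  by rewrite BE !eqxx orbT.
move=> y; rewrite hornerD hornerN pq0 pq2 !card_sig_neq hornerD.
have J_gt0 : (0 < #|J|)%N by apply/card_gt0P; exists a0.
have K_gt0 : (0 < #|K|)%N by apply/card_gt0P; exists b0.
case: #|J| J_gt0 => // j _; case: #|K| K_gt0 => // k _ /=.
have -> : j.+1%:R - k.+1%:R = j%:R - k%:R :> rat.
  by rewrite !mulrSr (addrC k%:R 1) addrKA.
by rewrite exprS; ring.
Qed.

Lemma extension_reciprocity_holds (J K : finType) (B : J -> K -> bool) :
  extension_reciprocity B.
Proof.
move cardJ: #|J| => n; elim/ltn_ind: n J K B cardJ => n IHn J K B cardJ.
move cardB: #|[set x : J * K | B x.1 x.2]| => m.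
elim/ltn_ind: m B cardB => m IHm B cardB.
have [noB|[[a0 b0]]] := set_0Vmem [set x : J * K | B x.1 x.2].
  apply: extension_reciprocity_no_bridges => a b; apply/negbTE/negP => Bab.
  by have := in_set0 (a, b); rewrite -noB inE /= Bab.
rewrite inE /= => Bab.
pose B0 a b := B a b && ~~ ((a == a0) && (b == b0)).
apply: (@extension_reciprocity_add_bridge _ _ B B0 a0 b0).
- by rewrite /B0 !eqxx andbF.
- move=> a b; rewrite /B0.
  by case: (a =P a0) => [->|_]; case: (b =P b0) => [->|_];
    rewrite /= ?Bab ?andbT ?orbT ?orbF.
- apply: (IHm _ _ B0 erefl).
  rewrite -cardB [X in (_ < X)%N](cardsD1 (a0, b0)) inE Bab ltnS.
  apply: subset_leq_card; apply/subsetP => -[a b].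
  by rewrite !inE /B0 xpair_eqE => /andP [-> ->].
- apply: (IHn _ _ _ _ _ erefl); rewrite card_sig_neq -cardJ prednK //.
  by apply/card_gt0P; exists a0.
Qed.

Section BicliqueColorings.
Variables (j k n : nat) (B : 'I_j -> 'I_k -> bool).

Definition glue_coloring (g : {ffun 'I_k -> 'I_n}) (f : {ffun 'I_j -> 'I_n})
  : {ffun 'I_j + 'I_k -> 'I_n} :=
  [ffun v => match v with inl a => f a | inr b => g b end].

Lemma glue_coloring_inj g : injective (glue_coloring g).
Proof.
move=> f f' ff'; apply/ffunP => a.
by have := congr1 (fun F : {ffun _ -> _} => F (inl a)) ff'; rewrite !ffunE.
Qed.

Lemma glue_coloringK (F : {ffun 'I_j + 'I_k -> 'I_n}) :
  glue_coloring [ffun b => F (inr b)] [ffun a => F (inl a)] = F.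
Proof. by apply/ffunP => -[a|b]; rewrite !ffunE. Qed.

Lemma proper_glue_coloring g f :
  proper_coloring (biclique_rel B) (glue_coloring g f)
    = [&& injectiveb g, injectiveb f & avoids B g f].
Proof.
apply/forallP/and3P => [P | [/injectiveP g_inj /injectiveP f_inj /forallP fB]].
  have P' u v : biclique_rel B u v -> glue_coloring g f u != glue_coloring g f v.
    exact: implyP (forallP (P u) v).
  split; first (apply/injectiveP => b b' gbb'; apply/eqP/negPn/negP => ne).
  - by have := P' (inr b) (inr b') ne; rewrite !ffunE gbb' eqxx.
  - apply/injectiveP => a a' faa'; apply/eqP/negPn/negP => ne.
    by have := P' (inl a) (inl a') ne; rewrite !ffunE faa' eqxx.
  - apply/forallP => a; apply/forallP => b; apply/implyP => Bab.
    by have := P' (inl a) (inr b) Bab; rewrite !ffunE.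
move=> [a|b]; apply/forallP => -[a'|b']; rewrite /= !ffunE; apply/implyP.
- by apply: contra => /eqP /f_inj ->.
- by move=> Bab'; have /forallP/(_ b')/implyP := fB a; apply.
- by move=> Ba'b; rewrite eq_sym; have /forallP/(_ b)/implyP := fB a'; apply.
- by apply: contra => /eqP /g_inj ->.
Qed.

Lemma num_colorings_biclique :
  num_colorings (biclique_rel B) n =
    (\sum_(g : {ffun 'I_k -> 'I_n} | injectiveb g) num_extensions B g)%N.
Proof.
rewrite /num_colorings -sum1dep_card.
rewrite (partition_big (fun F : {ffun _ -> 'I_n} => [ffun b => F (inr b)])
  predT) //= (bigID (fun g : {ffun 'I_k -> 'I_n} => injectiveb g)) /= [X in (_ + X)%N]big1 ?addn0.
  apply: eq_bigr => g g_inj; rewrite sum1dep_card /num_extensions.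
  rewrite -(card_imset _ (@glue_coloring_inj g)); apply: eq_card => F.
  rewrite !inE; apply/andP/imsetP => [[F_proper /eqP gF] | [f + ->]].
    exists [ffun a => F (inl a)]; last by rewrite -gF glue_coloringK.
    have := proper_glue_coloring [ffun b => F (inr b)] [ffun a => F (inl a)].
    by rewrite glue_coloringK F_proper gF inE => /esym/and3P [_ -> ->].
  rewrite inE proper_glue_coloring g_inj => ->; split => //.
  by apply/eqP/ffunP => b; rewrite !ffunE.
move=> g g_ninj; apply: big_pred0 => F.
apply: contraNF g_ninj => /andP [F_proper /eqP <-].
have := proper_glue_coloring [ffun b => F (inr b)] [ffun a => F (inl a)].
by rewrite glue_coloringK F_proper => /esym/and3P [].
Qed.

End BicliqueColorings.

Lemma chromatic_poly_biclique (j k : nat) (B : 'I_j -> 'I_k -> bool)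
  (P p : {poly rat}) :
  is_chromatic_poly (biclique_rel B) P -> is_extension_poly B p ->
  P = falling_poly k * (p \Po ('X - k%:R%:P)).
Proof.
move=> P_chrom B_p; apply: eq_poly_nat => m.
rewrite P_chrom num_colorings_biclique natr_sum.
rewrite (eq_bigr (fun=> p.[(m - k)%N%:R])) => [|g /injectiveP g_inj]; last first.
  by rewrite (B_p _ _ g_inj) !card_ord.
rewrite (eq_bigl [in [set g : {ffun 'I_k -> 'I_m} | injectiveb g]]) => [|g].
  rewrite sumr_const card_inj_ffuns !card_ord hornerM horner_comp hornerXsubC.
  rewrite falling_poly_nat mulr_natl.
  have [le_km|lt_mk] := leqP k m; first by rewrite natrB.
  by rewrite ffact_small // !mulr0n.
by rewrite inE.
Qed.

Lemma interesting_factor_biclique (j k : nat) (B : 'I_j -> 'I_k -> bool)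
  (P p : {poly rat}) :
  is_chromatic_poly (biclique_rel B) P -> is_extension_poly B p ->
  interesting_factor k P = p \Po ('X - k%:R%:P).
Proof.
move=> P_chrom B_p; rewrite /interesting_factor (chromatic_poly_biclique P_chrom B_p).
by rewrite mulKp // monic_neq0 // monic_prod_XsubC.
Qed.

Theorem mainTheorem5 (j k : nat) (hj : (1 <= j)%N) (hjk : (j <= k)%N)
  (B : 'I_j -> 'I_k -> bool) (PG PH : {poly rat}) :
  is_chromatic_poly (biclique_rel B) PG ->
  is_chromatic_poly (biclique_rel (compl_bridges B)) PH ->
  interesting_factor k PG =
    (-1) ^+ j *: (interesting_factor k PH \Po (- 'X + ((j + k - 1)%N%:R)%:P)).
Proof.
move=> PG_chrom PH_chrom.
have [p [q [B_p nB_q pq]]] := extension_reciprocity_holds B.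
rewrite (interesting_factor_biclique PG_chrom B_p).
rewrite (interesting_factor_biclique PH_chrom nB_q).
apply: eq_poly_nat => m; rewrite hornerZ !horner_comp pq !card_ord.
rewrite !hornerXsubC hornerD hornerN hornerX hornerC; congr (_ * q.[_]).
by rewrite natrB ?natrD ?(leq_trans hj (leq_addr _ _)) //; ring.
Qed.
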